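(* Let $k$ be an algebraically closed field of arbitrary characteristic and let $\mathcal{C}\subset\mathbb{P}^3$ be a quadric cone with vertex $v$. Fix an integer $d\ge 2$ and a point $q\in\mathcal{C}\setminus\{v\}$, and let $R_q\subset\mathcal{C}$ be the line spanned by $v$ and $q$. Then there is a smooth divisor $Y\in|\mathcal{O}_{\mathcal{C}}(d)|$ such that $v\notin Y$, $q\notin Y$, and $R_q$ meets $Y$ at a unique point.
   Context: $\mathcal{O}_{\mathcal{C}}(d)$ is the restriction of $\mathcal{O}_{\mathbb{P}^3}(d)$ to $\mathcal{C}$. *)

From HB Require Import structures.
From mathcomp Require Import all_boot all_order all_algebra.
From mathcomp Require Import mpoly.
Set Implicit Arguments. Unset Strict Implicit. Unset Printing Implicit Defensive.
Import GRing.Theory.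
Local Open Scope ring_scope.

(* Projective 3-space P^3 over a field k: points are represented by nonzero
   vectors x : 'I_4 -> k (homogeneous coordinates), up to nonzero scalars. *)

Section Proj.
Variable k : fieldType.

Definition vnonzero (x : 'I_4 -> k) : Prop := exists i, x i != 0.

Definition proj_eq (x y : 'I_4 -> k) : Prop := exists c : k, c != 0 /\ forall i, x i = c * y i.

Definition grad (p : {mpoly k[4]}) (x : 'I_4 -> k) : 'I_4 -> k :=
  fun i => (mderiv i p).@[x].

Definition on_hyp (p : {mpoly k[4]}) (x : 'I_4 -> k) : Prop :=
  vnonzero x /\ p.@[x] = 0.

Definition quadric_cone (Q : {mpoly k[4]}) (v : 'I_4 -> k) : Prop :=
  Q \is 2.-homog /\ vnonzero v /\
  forall x, vnonzero x ->
    ((Q.@[x] = 0 /\ forall i, grad Q x i = 0) <-> proj_eq x v).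

Definition lin_indep2 (a b : 'I_4 -> k) : Prop :=
  forall s t : k, (forall i, s * a i + t * b i = 0) -> s = 0 /\ t = 0.

(* The curve Y = C \cap V(F) (a divisor in |O_C(d)| when F has degree d) is
   smooth: Jacobian criterion for the complete intersection V(Q, F) -- at every
   point of Y the gradients of Q and F are linearly independent. *)
Definition smooth_section (Q F : {mpoly k[4]}) : Prop :=
  forall x, vnonzero x -> Q.@[x] = 0 -> F.@[x] = 0 ->
    lin_indep2 (grad Q x) (grad F x).

Definition on_line (v q x : 'I_4 -> k) : Prop :=
  vnonzero x /\ exists a b : k, forall i, x i = a * v i + b * q i.

End Proj.

From HB Require Import structures.
From mathcomp Require Import all_boot all_order all_algebra.
From mathcomp Require Import mpoly ring.
From Stdlib Require Import Classical.
Set Implicit Arguments. Unset Strict Implicit. Unset Printing Implicit Defensive.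
Import GRing.Theory.
Local Open Scope ring_scope.

(* Since v is the only
   singular point of the cone, one completes q + v, v to a basis q + v, r, w, v in which
   Q = y0 y1 + y2^2, in every characteristic.  In these coordinates the line R_q is
   {y1 = y2 = 0}, with v = (0:0:0:1) and q = (1:0:0:-1), and
     F = y3^d + y2 y0^(d-1) + c1 y2 y3^(d-1) + c2 y1 y0^(d-1) + c3 y1^d
   restricts to R_q as y3^d: it meets R_q only at q + v and vanishes neither at v nor
   at q.  The Jacobian criterion for C ∩ V(F) is checked by hand, with
   (c1, c2, c3) = (1, 0, 1) when the characteristic divides d, and (0, 1, ±1) otherwise:
   a singular point for c3 = κ forces κ to be a specific value, so it cannot happen for
   both κ = 1 and κ = -1.  The chain rule transports smoothness back to the original
   coordinates. *)

Lemma mderivXU (R : nzRingType) (n : nat) (i l : 'I_n) :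
  mderiv l ('X_i : {mpoly R[n]}) = ((i == l)%:R)%:MP.
Proof.
rewrite mderivX mnm1E; case: eqP => [->|_]; last by rewrite scale0r.
have -> : (U_(l) - U_(l))%MM = 0%MM by apply/mnmP => j; rewrite mnmBE subnn mnm0E.
by rewrite mpolyX0 scale1r.
Qed.

Lemma sum_mul_delta (R : nzSemiRingType) (n : nat) (F : 'I_n -> R) (l : 'I_n) :
  \sum_(j < n) F j * (j == l)%:R = F l.
Proof.
rewrite (bigD1 l) //= eqxx mulr1 big1 ?addr0 // => j /negbTE ->.
by rewrite mulr0.
Qed.

Section MPolyEval.
Variables (R : comNzRingType) (n : nat).
Implicit Types (p : {mpoly R[n]}) (y : 'I_n -> R).

Lemma mevalXn p e y : (p ^+ e).@[y] = p.@[y] ^+ e.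
Proof. exact: rmorphXn. Qed.

Lemma meval_mderivXn p l e y :
  (mderiv l (p ^+ e.+1)).@[y] = e.+1%:R * p.@[y] ^+ e * (mderiv l p).@[y].
Proof.
elim: e => [|e IHe]; first by rewrite expr1 expr0 mulr1 mul1r.
by rewrite exprS mderivM mevalD !mevalM IHe mevalXn exprS; ring.
Qed.

End MPolyEval.

Section IdomainFacts.
Variable R : idomainType.
Implicit Types a b : R.

Lemma mulf_eq0l a b : a * b = 0 -> b != 0 -> a = 0.
Proof. by move/eqP; rewrite mulf_eq0 => /orP[/eqP|/eqP ->/eqP]. Qed.

Lemma mulf_eq0r a b : a * b = 0 -> a != 0 -> b = 0.
Proof. by rewrite mulrC; apply: mulf_eq0l. Qed.

Lemma expf_eq0S a e : a ^+ e.+1 = 0 -> a = 0.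
Proof. by move/eqP; rewrite expf_eq0 => /eqP. Qed.

End IdomainFacts.

Lemma vnonzero4 (k : fieldType) (y : 'I_4 -> k) :
  vnonzero y -> y 0 = 0 -> y 1 = 0 -> y 2 = 0 -> y 3 = 0 -> False.
Proof.
case=> -[[|[|[|[|i]]]] lti] //= yi y0 y1 y2 y3; move: yi.
- by rewrite (_ : Ordinal lti = 0) ?y0 ?eqxx //; apply: val_inj.
- by rewrite (_ : Ordinal lti = 1) ?y1 ?eqxx //; apply: val_inj.
- by rewrite (_ : Ordinal lti = 2) ?y2 ?eqxx //; apply: val_inj.
- by rewrite (_ : Ordinal lti = 3) ?y3 ?eqxx //; apply: val_inj.
Qed.

Lemma sum_ord4 (V : nmodType) (F : 'I_4 -> V) : \sum_(i < 4) F i = F 0 + F 1 + F 2 + F 3.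
Proof.
rewrite !big_ord_recl big_ord0 addr0 !addrA.
by congr (_ + _ + _ + _); congr F; apply: val_inj.
Qed.

Lemma closed_sqrt (k : closedFieldType) (a : k) : exists b : k, b ^+ 2 = a.
Proof.
have [b Eb] := @solve_monicpoly k 2 (fun i => if i == 0%N then a else 0) isT.
by exists b; rewrite Eb big_ord_recl big_ord1 /= expr0 mulr1 mul0r addr0.
Qed.

Section QuadraticForm.
Variables (k : fieldType) (n : nat).

Lemma mdeg2P (m : 'X_{1..n}) : mdeg m = 2%N -> exists i j, m = (U_(i) + U_(j))%MM.
Proof.
move=> m2; have [i mi] : exists i, m i != 0%N.
  apply/existsP; apply: contraTT isT => /existsPn m0.
  suff /eqP : m = 0%MM by rewrite -mdeg_eq0 m2.
  by apply/mnmP => i; rewrite mnm0E; apply/eqP/negPn.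
have le_im : (U_(i) <= m)%MM by rewrite lep1mP.
have /mdeg1P [j /eqP mj] : mdeg (m - U_(i))%MM == 1%N.
  by move: m2; rewrite -{1}(submK le_im) mdegD mdeg1 addn1 => -[->].
by exists i, j; rewrite -{1}(submK le_im) mj addmC.
Qed.

Definition quadp (A : 'M[k]_n) : {mpoly k[n]} :=
  \sum_(i < n) \sum_(j < n) A i j *: ('X_i * 'X_j).

Lemma quadpD A B : quadp (A + B) = quadp A + quadp B.
Proof.
rewrite /quadp -big_split; apply: eq_bigr => i _.
by rewrite -big_split; apply: eq_bigr => j _; rewrite mxE scalerDl.
Qed.

Lemma quadp_delta c i j : quadp (c *: delta_mx i j) = c *: ('X_i * 'X_j).
Proof.
rewrite /quadp (bigD1 i) //= [X in _ + X]big1 ?addr0; last first.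
  by move=> i' /negbTE ni; apply: big1 => j' _; rewrite !mxE ni mulr0 scale0r.
rewrite (bigD1 j) //= [X in _ + X]big1 ?addr0; last first.
  by move=> j' /negbTE nj; rewrite !mxE eqxx nj mulr0 scale0r.
by rewrite !mxE !eqxx mulr1.
Qed.

Lemma dhomog2_quadp p : p \is 2.-homog -> exists A, p = quadp A.
Proof.
elim/mpolyind: p => [|c m p m_p c0 IH] /dhomogP mdeg2.
  by exists 0; rewrite /quadp; apply/esym/big1 => i _; apply/big1 => j _; rewrite mxE scale0r.
have coef_m : m \in msupp (c *: 'X_[m] + p).
  move: m_p; rewrite !mcoeff_msupp negbK mcoeffD mcoeffZ mcoeffX eqxx mulr1.
  by move=> /eqP ->; rewrite addr0.
have hom_p : p \is 2.-homog.
  apply/dhomogP => m' m'_p; apply: mdeg2.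
  have [eq_m|nm] := eqVneq m m'; first by case/negP: m_p; rewrite eq_m.
  by move: m'_p; rewrite !mcoeff_msupp mcoeffD mcoeffZ mcoeffX (negbTE nm) mulr0 add0r.
have [A ->] := IH hom_p.
have [i [j ->]] := mdeg2P (mdeg2 _ coef_m).
by exists (A + c *: delta_mx i j); rewrite quadpD quadp_delta mpolyXD addrC.
Qed.

Section PolarForm.
Variable A : 'M[k]_n.
Implicit Types r s u : 'rV[k]_n.

Definition qform r := (r *m A *m r^T) 0 0.
Definition polar r s := (r *m (A + A^T) *m s^T) 0 0.

Lemma bilin_trmx (B : 'M[k]_n) r s : (r *m B *m s^T) 0 0 = (s *m B^T *m r^T) 0 0.
Proof.
have -> : s *m B^T *m r^T = (r *m B *m s^T)^T by rewrite !trmx_mul trmxK mulmxA.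
by rewrite [in RHS]mxE.
Qed.

Lemma polarC r s : polar r s = polar s r.
Proof. by rewrite /polar bilin_trmx linearD /= trmxK addrC. Qed.

Lemma polarE r s : polar r s = (r *m A *m s^T) 0 0 + (s *m A *m r^T) 0 0.
Proof. by rewrite /polar mulmxDr mulmxDl mxE [X in _ + X]bilin_trmx trmxK. Qed.

Lemma polarDl r1 r2 s : polar (r1 + r2) s = polar r1 s + polar r2 s.
Proof. by rewrite /polar !mulmxDl mxE. Qed.

Lemma polarZl a r s : polar (a *: r) s = a * polar r s.
Proof. by rewrite /polar -!scalemxAl mxE. Qed.

Lemma polarDr r s1 s2 : polar r (s1 + s2) = polar r s1 + polar r s2.
Proof. by rewrite polarC polarDl !(polarC r). Qed.

Lemma polarZr a r s : polar r (a *: s) = a * polar r s.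
Proof. by rewrite polarC polarZl polarC. Qed.

Lemma polarNr r s : polar r (- s) = - polar r s.
Proof. by rewrite -scaleN1r polarZr mulN1r. Qed.

Lemma polar0l s : polar 0 s = 0.
Proof. by rewrite /polar !mul0mx mxE. Qed.

Lemma polarrr r : polar r r = 2%:R * qform r.
Proof. by rewrite polarE /qform; ring. Qed.

Lemma qformD r s : qform (r + s) = qform r + qform s + polar r s.
Proof. by rewrite polarE /qform linearD /= !mulmxDl !mulmxDr !mxE; ring. Qed.

Lemma qformZ a r : qform (a *: r) = a ^+ 2 * qform r.
Proof. by rewrite /qform linearZ /= -!scalemxAl -scalemxAr !mxE; ring. Qed.

Lemma polar_sum_delta r u : polar r u = \sum_(l < n) u 0 l * polar r (delta_mx 0 l).
Proof.
rewrite {1}(row_sum_delta u) /polar linear_sum /= mulmx_sumr summxE.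
by apply: eq_bigr => l _; rewrite linearZ /= -scalemxAr mxE.
Qed.

Lemma meval_quadp r : (quadp A).@[r 0] = qform r.
Proof.
rewrite /quadp (raddf_sum (meval (r 0))) /qform mxE.
rewrite (eq_bigr (fun i => \sum_(j < n) A i j * (r 0 i * r 0 j))).
  rewrite exchange_big; apply: eq_bigr => j _; rewrite !mxE mulr_suml.
  by apply: eq_bigr => i _; ring.
move=> i _; rewrite (raddf_sum (meval (r 0))); apply: eq_bigr => j _.
by rewrite /= mevalZ mevalM !mevalXU.
Qed.

Lemma meval_mderiv_quadp l r : (mderiv l (quadp A)).@[r 0] = polar r (delta_mx 0 l).
Proof.
rewrite polarE -rowE trmx_delta -colE !mxE /quadp.
rewrite (raddf_sum (mderiv l)) (raddf_sum (meval (r 0))).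
rewrite (eq_bigr (fun i => (\sum_(j < n) A i j * r 0 j) * (i == l)%:R + r 0 i * A i l)).
  rewrite big_split /= sum_mul_delta addrC; congr (_ + _).
  by apply: eq_bigr => j _; rewrite !mxE.
move=> i _; rewrite (raddf_sum (mderiv l)) (raddf_sum (meval (r 0))).
rewrite (eq_bigr (fun j => A i j * r 0 j * (i == l)%:R + r 0 i * A i j * (j == l)%:R)).
  by rewrite big_split /= sum_mul_delta mulr_suml.
move=> j _ /=; rewrite mderivZ mderivM !mderivXU.
by rewrite mevalZ mevalD !mevalM !mevalXU !mevalC; ring.
Qed.

End PolarForm.
End QuadraticForm.

Section LinearSubstitution.
Variables (R : comNzRingType) (n : nat).

Lemma mderiv_comp_mpoly (m : nat) (lq : n.-tuple {mpoly R[m]}) l p :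
  mderiv l (p \mPo lq) = \sum_(j < n) mderiv l (tnth lq j) * (mderiv j p \mPo lq).
Proof.
pose chain p := mderiv l (p \mPo lq) = \sum_(j < n) mderiv l (tnth lq j) * (mderiv j p \mPo lq).
have chainC c : chain c%:MP.
  by rewrite /chain comp_mpolyC mderivC big1 // => j _; rewrite mderivC comp_mpoly0 mulr0.
have chainD p1 p2 : chain p1 -> chain p2 -> chain (p1 + p2).
  rewrite /chain !raddfD /= => -> ->; rewrite -big_split /=.
  by apply: eq_bigr => j _; rewrite mderivD raddfD mulrDr.
have chainM p1 p2 : chain p1 -> chain p2 -> chain (p1 * p2).
  rewrite /chain !rmorphM /= mderivM => -> ->; rewrite mulr_suml mulr_sumr -big_split /=.
  by apply: eq_bigr => j _; rewrite mderivM raddfD /= !(rmorphM (comp_mpoly lq)); ring.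
have chainX i : chain 'X_i.
  rewrite /chain comp_mpolyXU -tnth_nth (eq_bigr (fun j => mderiv l (tnth lq j) * (j == i)%:R)).
    by rewrite sum_mul_delta.
  by move=> j _; rewrite mderivXU comp_mpolyC rmorph_nat eq_sym.
have chain1 : chain 1 by rewrite -mpolyC1; apply: (chainC).
elim/mpolyind: p => [|c mon p _ _ chain_p]; first by rewrite -mpolyC0; apply: (chainC).
apply: chainD chain_p; rewrite -mul_mpolyC; apply: (chainM _ _ (chainC c)).
rewrite mpolyXE_id; apply: big_ind => // i _.
by elim: (mon i) => [|e IHe]; rewrite ?expr0 // exprS; apply: (chainM).
Qed.

Definition lin_forms (M : 'M[R]_n) : n.-tuple {mpoly R[n]} :=
  [tuple \sum_(i < n) M i j *: 'X_i | j < n].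

Definition mlinsubst M p := p \mPo lin_forms M.

Lemma meval_mlinsubst M p (r : 'rV[R]_n) : (mlinsubst M p).@[r 0] = p.@[(r *m M) 0].
Proof.
rewrite comp_mpoly_meval; apply: meval_eq => j; rewrite tnth_mktuple raddf_sum !mxE /=.
by apply: eq_bigr => i _; rewrite mevalZ mevalXU mulrC.
Qed.

Lemma mderiv_mlinsubst M p l :
  mderiv l (mlinsubst M p) = \sum_(j < n) M l j *: mlinsubst M (mderiv j p).
Proof.
rewrite mderiv_comp_mpoly; apply: eq_bigr => j _; rewrite tnth_mktuple raddf_sum /=.
rewrite (bigD1 l) //= big1 ?addr0 => [|i /negbTE il]; last by rewrite mderivZ mderivXU il scaler0.
by rewrite mderivZ mderivXU eqxx -mul_mpolyC -mpolyCM mulr1 mul_mpolyC.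
Qed.

Lemma dhomog_mlinsubst d M p : p \is d.-homog -> mlinsubst M p \is d.-homog.
Proof.
move=> /dhomogP hom_p; rewrite /mlinsubst comp_mpolyEX big_seq rpred_sum // => mon mon_p.
rewrite rpredZ // comp_mpolyX -(hom_p _ mon_p) /= mdegE.
apply: (big_ind2 (fun q e => q \is e.-homog)) => [|q1 e1 q2 e2|i _]; first exact: dhomog1.
  exact: dhomogM.
rewrite tnth_mktuple -[X in _ \is X.-homog]mul1n; apply: dhomogMn.
by rewrite rpred_sum // => j _; rewrite rpredZ // dhomogX /= mdeg1.
Qed.

End LinearSubstitution.

Section SmoothSection.
Variable k : fieldType.
Implicit Types (M : 'M[k]_4) (p Q F : {mpoly k[4]}).

Lemma vnonzero_row (r : 'rV[k]_4) : vnonzero (r 0) <-> r != 0.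
Proof.
split=> [[i ri]|/matrix0Pn [i [j rij]]]; last by exists j; rewrite -(ord1 i).
by apply: contraNneq ri => ->; rewrite mxE.
Qed.

Lemma grad_mlinsubst M p (r : 'rV[k]_4) l :
  grad (mlinsubst M p) (r 0) l = \sum_(j < 4) M l j * grad p ((r *m M) 0) j.
Proof.
rewrite /grad mderiv_mlinsubst raddf_sum; apply: eq_bigr => j _.
by rewrite /= mevalZ meval_mlinsubst.
Qed.

(* Only values and gradients enter [smooth_section], so [p] composed with [y |-> y *m M]
   has to agree with [p0] to first order only, not as a polynomial. *)
Definition pullback_jet M p p0 := forall y : 'rV[k]_4,
  p.@[(y *m M) 0] = p0.@[y 0] /\
  forall m, \sum_(l < 4) M m l * grad p ((y *m M) 0) l = grad p0 (y 0) m.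

Lemma pullback_jet_mlinsubst M p : M \in unitmx -> pullback_jet M (mlinsubst (invmx M) p) p.
Proof.
move=> Mu y; rewrite meval_mlinsubst mulmxK //; split=> // m.
under eq_bigr => l _ do rewrite grad_mlinsubst mulmxK // mulr_sumr.
rewrite exchange_big /= -(sum_mul_delta (grad p (y 0)) m).
apply: eq_bigr => j _; rewrite mulrC.
under eq_bigr => l _ do rewrite mulrA.
rewrite -mulr_suml; congr (_ * _).
by have := congr1 (fun B : 'M[k]_4 => B m j) (mulmxV Mu); rewrite !mxE eq_sym => ->.
Qed.

Lemma smooth_section_pullback M Q F Q0 F0 : M \in unitmx ->
  pullback_jet M Q Q0 -> pullback_jet M F F0 ->
  smooth_section Q0 F0 -> smooth_section Q F.
Proof.
move=> Mu jetQ jetF smooth0 x x_nz Qx Fx s t dep.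
pose y := \row_i x i *m invmx M.
have yMx : (y *m M) 0 =1 x by move=> i; rewrite mulmxKV // mxE.
have [Q0y dQ0y] := jetQ y; have [F0y dF0y] := jetF y.
rewrite (meval_eq _ yMx) in Q0y; rewrite (meval_eq _ yMx) in F0y.
apply: (smooth0 (y 0)) => [|||m].
- apply/vnonzero_row/eqP => y0; case: x_nz => i.
  by rewrite -yMx y0 mul0mx mxE eqxx.
- by rewrite -Q0y.
- by rewrite -F0y.
- rewrite -dQ0y -dF0y !mulr_sumr -big_split big1 // => l _.
  rewrite /= /grad (meval_eq _ yMx) (meval_eq _ yMx).
  by transitivity (M m l * (s * grad Q x l + t * grad F x l)); [ring | rewrite dep mulr0].
Qed.

End SmoothSection.

Section NormalForm.
Variable k : fieldType.
Implicit Types (y : 'I_4 -> k) (s t : k).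

Definition cone_nf : {mpoly k[4]} := 'X_0 * 'X_1 + 'X_2 ^+ 2.

Lemma meval_cone_nf y : cone_nf.@[y] = y 0 * y 1 + y 2 ^+ 2.
Proof. by rewrite mevalD mevalM mevalXn !mevalXU. Qed.

Lemma grad_cone_nf y m :
  grad cone_nf y m = y 1 * (0 == m)%:R + y 0 * (1 == m)%:R + 2%:R * y 2 * (2 == m)%:R.
Proof.
rewrite /grad mderivD mderivM mevalD mevalD !mevalM (meval_mderivXn _ _ 1) !mderivXU.
by rewrite !mevalC !mevalXU expr1 [_ * y 1]mulrC.
Qed.

Lemma meval_XXn (i j : 'I_4) e y : ('X_i * 'X_j ^+ e).@[y] = y i * y j ^+ e.
Proof. by rewrite mevalM mevalXU mevalXn mevalXU. Qed.

Lemma meval_mderivXn_X (i l : 'I_4) e y :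
  (mderiv l ('X_i ^+ e.+1)).@[y] = e.+1%:R * y i ^+ e * (i == l)%:R.
Proof. by rewrite meval_mderivXn mevalXU mderivXU mevalC. Qed.

Lemma meval_mderivXXn (i j l : 'I_4) e y :
  (mderiv l ('X_i * 'X_j ^+ e.+1)).@[y] =
  (i == l)%:R * y j ^+ e.+1 + y i * (e.+1%:R * y j ^+ e * (j == l)%:R).
Proof.
by rewrite mderivM mevalD !mevalM mderivXU mevalC mevalXn !mevalXU meval_mderivXn_X.
Qed.

Definition section_nf c1 c2 c3 (n : nat) : {mpoly k[4]} :=
  'X_3 ^+ n.+2 + 'X_2 * 'X_0 ^+ n.+1 + c1 *: ('X_2 * 'X_3 ^+ n.+1)
  + c2 *: ('X_1 * 'X_0 ^+ n.+1) + c3 *: 'X_1 ^+ n.+2.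

Variables (c1 c2 c3 : k) (n : nat).
Local Notation F := (section_nf c1 c2 c3 n).

Lemma meval_section_nf y : F.@[y] =
  y 3 ^+ n.+2 + y 2 * y 0 ^+ n.+1 + c1 * (y 2 * y 3 ^+ n.+1)
  + c2 * (y 1 * y 0 ^+ n.+1) + c3 * y 1 ^+ n.+2.
Proof.
rewrite /section_nf 4!mevalD; congr (_ + _ + _ + _ + _).
- by rewrite mevalXn mevalXU.
- exact: meval_XXn.
- by rewrite mevalZ meval_XXn.
- by rewrite mevalZ meval_XXn.
- by rewrite mevalZ mevalXn mevalXU.
Qed.

Lemma meval_section_nf_axis y : y 1 = 0 -> y 2 = 0 -> F.@[y] = y 3 ^+ n.+2.
Proof. by move=> y1 y2; rewrite meval_section_nf y1 y2 !(mul0r, mulr0, expr0n, addr0). Qed.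

Lemma dhomog_section_nf : F \is n.+2.-homog.
Proof.
have hXn i e : ('X_i : {mpoly k[4]}) ^+ e \is e.-homog.
  by rewrite -[X in _ \is X.-homog]mul1n; apply: dhomogMn; rewrite dhomogX /= mdeg1.
have hXXn i j : ('X_i * 'X_j ^+ n.+1 : {mpoly k[4]}) \is n.+2.-homog.
  by rewrite -[n.+2]add1n; apply: dhomogM; [exact: (hXn i 1%N) | exact: hXn].
rewrite /section_nf; apply: rpredD; last exact/rpredZ/hXn.
do 2 (apply: rpredD; last exact/rpredZ/hXXn).
by apply: rpredD; [exact: hXn | exact: hXXn].
Qed.

Lemma grad_section_nf y m : grad F y m =
  n.+2%:R * y 3 ^+ n.+1 * (3 == m)%:R
  + ((2 == m)%:R * y 0 ^+ n.+1 + y 2 * (n.+1%:R * y 0 ^+ n * (0 == m)%:R))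
  + c1 * ((2 == m)%:R * y 3 ^+ n.+1 + y 2 * (n.+1%:R * y 3 ^+ n * (3 == m)%:R))
  + c2 * ((1 == m)%:R * y 0 ^+ n.+1 + y 1 * (n.+1%:R * y 0 ^+ n * (0 == m)%:R))
  + c3 * (n.+2%:R * y 1 ^+ n.+1 * (1 == m)%:R).
Proof.
rewrite /grad /section_nf 4!mderivD 4!mevalD; congr (_ + _ + _ + _ + _).
- exact: meval_mderivXn_X.
- exact: meval_mderivXXn.
- by rewrite mderivZ mevalZ meval_mderivXXn.
- by rewrite mderivZ mevalZ meval_mderivXXn.
- by rewrite mderivZ mevalZ meval_mderivXn_X.
Qed.

Lemma critical_section_nf y s t :
  (forall m, s * grad cone_nf y m + t * grad F y m = 0) ->
  [/\ s * y 1 + t * (n.+1%:R * (y 2 * y 0 ^+ n) + c2 * (n.+1%:R * (y 1 * y 0 ^+ n))) = 0,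
      s * y 0 + t * (c2 * y 0 ^+ n.+1 + c3 * (n.+2%:R * y 1 ^+ n.+1)) = 0,
      s * (2%:R * y 2) + t * (y 0 ^+ n.+1 + c1 * y 3 ^+ n.+1) = 0 &
      t * (n.+2%:R * y 3 ^+ n.+1 + c1 * (n.+1%:R * (y 2 * y 3 ^+ n))) = 0].
Proof.
move=> dep; split.
- by move: (dep 0); rewrite grad_cone_nf grad_section_nf /= => <-; ring.
- by move: (dep 1); rewrite grad_cone_nf grad_section_nf /= => <-; ring.
- by move: (dep 2); rewrite grad_cone_nf grad_section_nf /= => <-; ring.
- by move: (dep 3); rewrite grad_cone_nf grad_section_nf /= => <-; ring.
Qed.

End NormalForm.
Arguments cone_nf {k}.

Section SmoothNormalForm.
Variable k : fieldType.
Implicit Types (y : 'I_4 -> k) (s t : k).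
Variable n : nat.

Lemma cone_nf_regular_on_section c1 c2 c3 y s : vnonzero y ->
  cone_nf.@[y] = 0 -> (section_nf c1 c2 c3 n).@[y] = 0 ->
  s * y 1 = 0 -> s * y 0 = 0 -> s = 0.
Proof.
rewrite meval_cone_nf meval_section_nf => y_nz Qy Fy s1 s0.
have [//|s_nz] := eqVneq s 0; exfalso.
have y0 : y 0 = 0 := mulf_eq0r s0 s_nz.
have y1 : y 1 = 0 := mulf_eq0r s1 s_nz.
have y2 : y 2 = 0 by apply: (expf_eq0S (e := 1)); rewrite -Qy y0 mul0r add0r.
apply: (vnonzero4 y_nz) => //; apply: (expf_eq0S (e := n.+1)).
by rewrite -Fy y0 y1 y2 !(mul0r, expr0n, mulr0, addr0).
Qed.

Lemma smooth_section_nf_pchar :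
  (n.+2%:R : k) = 0 -> smooth_section cone_nf (section_nf (1 : k) 0 1 n).
Proof.
move=> n2 y y_nz Qy Fy s t /critical_section_nf[E0 E1 E2 E3].
have n1 : (n.+1%:R : k) = -1 by apply/eqP; rewrite -subr_eq0 opprK natr1 n2.
move: E1 E3; rewrite n2 n1 !(mul0r, mulr0, add0r, addr0, mul1r, mulN1r) => s0 E3.
have [t0|t_nz] := eqVneq t 0.
  split=> //; apply: (cone_nf_regular_on_section y_nz Qy Fy) => //.
  by rewrite -E0 t0 mul0r addr0.
exfalso; move: Qy Fy; rewrite meval_cone_nf meval_section_nf => Qy Fy.
have y23 : y 2 * y 3 ^+ n = 0.
  by apply/eqP; rewrite -oppr_eq0; apply/eqP/(mulf_eq0r E3).
have [y0|y0_nz] := eqVneq (y 0) 0.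
  have y2 : y 2 = 0 by apply: (expf_eq0S (e := 1)); rewrite -Qy y0 mul0r add0r.
  have y3 : y 3 = 0.
    apply: (expf_eq0S (e := n)); apply: (mulf_eq0r _ t_nz).
    by rewrite -E2 y0 y2 !(mulr0, expr0n, mul0r, add0r, mul1r).
  apply: (vnonzero4 y_nz) => //; apply: (expf_eq0S (e := n.+1)).
  by rewrite -Fy y0 y2 y3 !(mul0r, expr0n, mulr0, addr0, add0r, mul1r).
move: E2; rewrite (mulf_eq0l s0 y0_nz) mul0r add0r mul1r => /(mulf_eq0r)/(_ t_nz) E2.
have [y3|y3_nz] := eqVneq (y 3) 0.
  by move/eqP: y0_nz; apply; apply: (expf_eq0S (e := n)); rewrite -E2 y3 expr0n addr0.
have y2 : y 2 = 0 := mulf_eq0l y23 (expf_neq0 _ y3_nz).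
have y1 : y 1 = 0 by apply: (mulf_eq0r _ y0_nz); rewrite -Qy y2 expr0n addr0.
move/eqP: y3_nz; apply; apply: (expf_eq0S (e := n.+1)).
by rewrite -Fy y1 y2 !(mul0r, expr0n, mulr0, addr0, add0r, mul1r).
Qed.

(* The two equations saying that V(cone_nf, section_nf 0 1 kap n) is singular at the point
   (1 : -tau^2 : tau : 0). *)
Definition singular_param kap := exists tau : k,
  tau - tau ^+ 2 + kap * (- tau ^+ 2) ^+ n.+2 = 0 /\
  2%:R * tau * (1 + kap * (n.+2%:R * (- tau ^+ 2) ^+ n.+1)) = 1.

Lemma smooth_section_nf kap : (n.+2%:R : k) != 0 -> kap != 0 -> ~ singular_param kap ->
  smooth_section cone_nf (section_nf 0 1 kap n).
Proof.
move=> n2 kap_nz regular y y_nz Qy Fy s t /critical_section_nf[E0 E1 E2 E3].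
have [t0|t_nz] := eqVneq t 0.
  split=> //; apply: (cone_nf_regular_on_section y_nz Qy Fy).
    by rewrite -E0 t0 mul0r addr0.
  by rewrite -E1 t0 mul0r addr0.
exfalso; move: Qy Fy; rewrite meval_cone_nf meval_section_nf => Qy Fy.
have y3 : y 3 = 0.
  move: E3; rewrite mul0r addr0 => /(mulf_eq0r)/(_ t_nz)/(mulf_eq0r)/(_ n2).
  exact: expf_eq0S.
have [y0|y0_nz] := eqVneq (y 0) 0.
  have y2 : y 2 = 0 by apply: (expf_eq0S (e := 1)); rewrite -Qy y0 mul0r add0r.
  apply: (vnonzero4 y_nz) => //; apply: (expf_eq0S (e := n.+1)); apply: (mulf_eq0r _ kap_nz).
  by rewrite -Fy y0 y2 y3 !(mul0r, expr0n, mulr0, addr0, add0r).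
have [tau y2E] : exists tau, y 2 = tau * y 0 by exists (y 2 / y 0); rewrite divfK.
have y1E : y 1 = - tau ^+ 2 * y 0.
  by apply: (mulIf y0_nz); apply/eqP; rewrite -subr_eq0 -Qy y2E; apply/eqP; ring.
apply: regular; exists tau; split.
  apply: (mulIf (expf_neq0 n.+2 y0_nz)); rewrite mul0r -[RHS]Fy y1E y2E y3.
  by rewrite exprMn expr0n /= !(exprS _ n.+1); ring.
have elim_s : t * (2%:R * y 2 * (y 0 ^+ n.+1 + kap * (n.+2%:R * y 1 ^+ n.+1))
                   - y 0 * y 0 ^+ n.+1) = 0.
  transitivity (2%:R * y 2 * (s * y 0 + t * (1 * y 0 ^+ n.+1 + kap * (n.+2%:R * y 1 ^+ n.+1)))
                - y 0 * (s * (2%:R * y 2) + t * (y 0 ^+ n.+1 + 0 * y 3 ^+ n.+1))); first ring.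
  by rewrite E1 E2; ring.
apply: (mulIf (mulf_neq0 y0_nz (expf_neq0 n.+1 y0_nz))); apply/eqP; rewrite -subr_eq0.
by rewrite -(mulf_eq0r elim_s t_nz) y2E y1E exprMn; apply/eqP; ring.
Qed.

Lemma singular_paramP kap : singular_param kap -> exists tau : k, [/\ tau != 0,
  kap * (- tau ^+ 2) ^+ n.+1 * tau = 1 - tau & 2%:R * n.+1%:R * tau = 2%:R * n.+1%:R + 1].
Proof.
move=> [tau [E1 E2]]; set T := (- tau ^+ 2) ^+ n.+1 in E2 *.
have tau_nz : tau != 0 by apply: contra_eq_neq E2 => ->; rewrite mulr0 mul0r eq_sym oner_eq0.
have kT : kap * T * tau = 1 - tau.
  apply/eqP; rewrite -subr_eq0; apply/eqP; apply: (mulf_eq0r _ tau_nz).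
  transitivity (- (tau - tau ^+ 2 + kap * (- tau ^+ 2) ^+ n.+2)); last by rewrite E1 oppr0.
  by rewrite [(- tau ^+ 2) ^+ n.+2]exprSr -/T; ring.
exists tau; split=> //; apply/eqP; rewrite -subr_eq0; apply/eqP.
transitivity (2%:R * n.+2%:R * (kap * T * tau - (1 - tau))
              - (2%:R * tau * (1 + kap * (n.+2%:R * T)) - 1)).
  by rewrite -[n.+2%:R]natr1; ring.
by rewrite kT E2 !subrr mulr0 subr0.
Qed.

Lemma not_singular_param_pm1 : ~ (singular_param 1 /\ singular_param (-1)).
Proof.
move=> [/singular_paramP[tau [tau_nz E1 F1]] /singular_paramP[tau' [_ E2 F2]]].
set a := 2%:R * n.+1%:R in F1 F2.
have a_nz : a != 0 by apply: contra_eq_neq F1 => ->; rewrite mul0r add0r eq_sym oner_neq0.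
have two_nz : (2%:R : k) != 0 by apply: contra_neq a_nz => two0; rewrite /a two0 mul0r.
move: E2; rewrite (mulfI a_nz (etrans F2 (esym F1))) -E1 mulN1r mul1r => /eqP.
rewrite mulNr -subr_eq0 -opprD oppr_eq0 -mulr2n -mulr_natl mulf_eq0 (negbTE two_nz) /=.
by rewrite !mulf_eq0 expf_eq0 oppr_eq0 expf_eq0 /= (negbTE tau_nz).
Qed.

Lemma exists_smooth_section_nf :
  exists c1 c2 c3 : k, smooth_section cone_nf (section_nf c1 c2 c3 n).
Proof.
have [n2|n2] := eqVneq (n.+2%:R : k) 0.
  by exists 1, 0, 1; exact: smooth_section_nf_pchar.
have [sing1|reg1] := classic (singular_param 1).
  exists 0, 1, (-1); apply: smooth_section_nf => //; first by rewrite oppr_eq0 oner_eq0.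
  by move=> sing_1; apply: not_singular_param_pm1.
by exists 0, 1, 1; apply: smooth_section_nf => //; exact: oner_neq0.
Qed.

End SmoothNormalForm.

Section ConeFrame.
Variables (k : closedFieldType) (A : 'M[k]_4) (v q : 'rV[k]_4).
Local Notation qform := (qform A).
Local Notation polar := (polar A).
Hypotheses (v_nz : v != 0) (v_cone : qform v = 0) (v_sing : forall x, polar v x = 0).
Hypothesis singular_multiple : forall x, x != 0 -> qform x = 0 ->
  (forall y, polar x y = 0) -> exists c, x = c *: v.
Hypothesis q_cone : qform q = 0.
Hypothesis q_off_v : forall c, q != c *: v.

Lemma exists_polar_partner : exists r, qform r = 0 /\ polar q r = 1.
Proof.
have [/forallP q_sing|/forallPn [l ql]] := boolP [forall l, polar q (delta_mx 0 l) == 0].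
  have q_nz : q != 0 by apply: contra_neq (q_off_v 0) => ->; rewrite scale0r.
  have [|c qv] := singular_multiple q_nz q_cone.
    by move=> y; rewrite polar_sum_delta big1 // => l _; rewrite (eqP (q_sing l)) mulr0.
  by have := q_off_v c; rewrite qv eqxx.
have [r0 qr0] : exists r0, polar q r0 = 1.
  by exists ((polar q (delta_mx 0 l))^-1 *: delta_mx 0 l); rewrite polarZr mulVf.
exists (r0 - qform r0 *: q); split.
  by rewrite qformD polarNr polarZr -scaleNr qformZ q_cone polarC qr0; ring.
by rewrite polarDr polarNr polarZr polarrr q_cone qr0; ring.
Qed.

Section Partner.
Variable r : 'rV[k]_4.
Hypotheses (r_cone : qform r = 0) (qr : polar q r = 1).

Lemma polar_orth_decomp z : exists z',
  [/\ polar q z' = 0, polar r z' = 0 & z = z' + polar q z *: r + polar r z *: q].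
Proof.
exists (z - polar r z *: q - polar q z *: r).
rewrite !polarDr !polarNr !polarZr !polarrr q_cone r_cone qr [polar r q]polarC qr.
by split; [ring | ring | rewrite !subrK].
Qed.

(* Otherwise Q would vanish on the b-orthogonal W of <q, r>; by polarization every point
   of W would be singular, hence W <= <v>, and k^4 = W + <q, r> would have rank <= 3. *)
Lemma exists_polar_unit : exists w, [/\ polar q w = 0, polar r w = 0 & qform w = 1].
Proof.
have [w0 [qw0 rw0 w0_nz]] : exists w0, [/\ polar q w0 = 0, polar r w0 = 0 & qform w0 != 0].
  apply: NNPP => none.
  have iso x : polar q x = 0 -> polar r x = 0 -> qform x = 0.
    by move=> qx rx; apply/eqP/negP => /negP x_nz; apply: none; exists x.
  have rad x : polar q x = 0 -> polar r x = 0 -> forall z, polar x z = 0.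
    move=> qx rx z; have [z' [qz' rz' ->]] := polar_orth_decomp z.
    have := iso (x + z'); rewrite !polarDr qx rx qz' rz' qformD iso // iso // !add0r.
    move=> /(_ erefl erefl) xz'; rewrite !polarZr xz'.
    by rewrite [polar x r]polarC [polar x q]polarC qx rx; ring.
  pose B : 'M[k]_(3, 4) := \matrix_(i < 3) nth 0 [:: q; r; v] i.
  suff /mxrankS : (1%:M <= B)%MS by rewrite mxrank1 => /leq_trans/(_ (rank_leq_row B)).
  apply/row_subP => l; rewrite row1.
  have [z' [qz' rz' ->]] := polar_orth_decomp (delta_mx 0 l).
  have [c ->] : exists c, z' = c *: v.
    have [->|z'_nz] := eqVneq z' 0; first by exists 0; rewrite scale0r.
    exact: singular_multiple z'_nz (iso z' qz' rz') (rad z' qz' rz').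
  have inB (i : 'I_3) : (nth 0 [:: q; r; v] i <= B)%MS by have := row_sub i B; rewrite rowK.
  apply: addmx_sub; first apply: addmx_sub; apply: scalemx_sub.
  - exact: (inB 2).
  - exact: (inB 1).
  - exact: (inB 0).
have [b Eb] := closed_sqrt (qform w0).
have b_nz : b != 0 by apply: contra_neq w0_nz => b0; rewrite -Eb b0 expr0n.
exists (b^-1 *: w0); rewrite !polarZr qw0 rw0 qformZ -Eb exprVn mulVf ?expf_neq0 //.
by split=> //; rewrite mulr0.
Qed.

End Partner.

Section Frame.
Variables r w : 'rV[k]_4.
Hypotheses (r_cone : qform r = 0) (qr : polar q r = 1).
Hypotheses (qw : polar q w = 0) (rw : polar r w = 0) (w_unit : qform w = 1).

(* Taking q + v rather than q as first row puts q at (1 : 0 : 0 : -1), where the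
   restriction y3^d of [section_nf] to the line vq does not vanish. *)
Definition frame : 'M[k]_4 := \matrix_(i < 4) nth 0 [:: q + v; r; w; v] i.

Lemma mul_frame y : y *m frame = y 0 0 *: (q + v) + y 0 1 *: r + y 0 2 *: w + y 0 3 *: v.
Proof. by rewrite mulmx_sum_row sum_ord4 !rowK. Qed.

Lemma polar_frame y z : polar (y *m frame) (z *m frame) =
  y 0 0 * z 0 1 + y 0 1 * z 0 0 + 2%:R * y 0 2 * z 0 2.
Proof.
have vx x : polar x v = 0 by rewrite polarC.
rewrite !mul_frame !(polarDl, polarDr, polarZl, polarZr) !v_sing !vx !polarrr.
by rewrite q_cone r_cone w_unit [polar r q]polarC [polar w q]polarC [polar w r]polarC qr qw rw; ring.
Qed.

Lemma qform_frame y : qform (y *m frame) = y 0 0 * y 0 1 + y 0 2 ^+ 2.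
Proof.
have vx x : polar x v = 0 by rewrite polarC.
rewrite mul_frame !qformD !qformZ qformD !(polarDl, polarDr, polarZl, polarZr) !v_sing !vx.
by rewrite q_cone v_cone r_cone w_unit qr qw rw; ring.
Qed.

Lemma frame_unit : frame \in unitmx.
Proof.
rewrite -row_free_unit; apply: inj_row_free => y y0.
have y0_0 : y 0 0 = 0.
  by have := polar_frame y (delta_mx 0 1); rewrite y0 polar0l !mxE /= => ->; ring.
have y0_1 : y 0 1 = 0.
  by have := polar_frame y (delta_mx 0 0); rewrite y0 polar0l !mxE /= => ->; ring.
have y0_2 : y 0 2 = 0.
  apply: (expf_eq0S (e := 1)); have := qform_frame y.
  by rewrite y0 -(scale0r 0) qformZ expr0n y0_0 /= !mul0r add0r => <-.
have y0_3 : y 0 3 = 0.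
  apply/eqP; move: y0; rewrite mul_frame y0_0 y0_1 y0_2 !scale0r !add0r => /eqP.
  by rewrite scaler_eq0 (negbTE v_nz) orbF.
by rewrite (row_sum_delta y) sum_ord4 y0_0 y0_1 y0_2 y0_3 !scale0r !addr0.
Qed.

Lemma pullback_jet_frame : pullback_jet frame (quadp A) cone_nf.
Proof.
move=> y; split=> [|m]; first by rewrite meval_quadp qform_frame meval_cone_nf.
under eq_bigr => l _ do rewrite /grad meval_mderiv_quadp.
transitivity (polar (y *m frame) (delta_mx 0 m *m frame)).
  by rewrite [RHS]polar_sum_delta; apply: eq_bigr => l _; rewrite -rowE !mxE.
by rewrite polar_frame grad_cone_nf !mxE /= [y 0 0 * _ + _]addrC.
Qed.

End Frame.

Lemma cone_frame : exists M, [/\ M \in unitmx, delta_mx 0 0 *m M = q + v,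
  delta_mx 0 3 *m M = v & pullback_jet M (quadp A) cone_nf].
Proof.
have [r [r_cone qr]] := exists_polar_partner.
have [w [qw rw w_unit]] := exists_polar_unit r_cone qr.
exists (frame r w); split; rewrite -?rowE ?rowK //.
- exact: frame_unit.
- exact: pullback_jet_frame.
Qed.

End ConeFrame.

Section Coordinates.
Variable k : fieldType.
Implicit Types (A : 'M[k]_4).

Lemma meval_row (p : {mpoly k[4]}) (x : 'I_4 -> k) : p.@[x] = p.@[(\row_i x i) 0].
Proof. by apply: meval_eq => i; rewrite mxE. Qed.

Lemma vnonzero_rowP (x : 'I_4 -> k) : vnonzero x <-> \row_i x i != 0.
Proof. by rewrite -vnonzero_row; split=> -[i xi]; exists i; rewrite mxE in xi *. Qed.

Lemma row_lin a b (x x' : 'I_4 -> k) :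
  \row_i (a * x i + b * x' i) = a *: \row_i x i + b *: \row_i x' i.
Proof. by apply/rowP => i; rewrite !mxE. Qed.

Lemma quadric_cone_polar A v : quadric_cone (quadp A) v -> let vr := \row_i v i in
  [/\ vr != 0, qform A vr = 0, (forall y, polar A vr y = 0) &
      forall x, x != 0 -> qform A x = 0 -> (forall y, polar A x y = 0) ->
      exists c, x = c *: vr].
Proof.
move=> [_ [v_nz cone]] vr.
have sing_polar (r : 'rV_4) :
    (forall l, grad (quadp A) (r 0) l = 0) <-> forall y, polar A r y = 0.
  split=> [gr y|pr l]; last by rewrite /grad meval_mderiv_quadp pr.
  rewrite polar_sum_delta big1 // => l _.
  by move: (gr l); rewrite /grad meval_mderiv_quadp => ->; rewrite mulr0.
have coneP (r : 'rV_4) :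
    r != 0 -> (qform A r = 0 /\ forall y, polar A r y = 0) <-> proj_eq (r 0) v.
  move=> /vnonzero_row/cone <-; rewrite meval_quadp.
  by split=> -[rQ rsing]; split=> //; apply/sing_polar.
have vr_nz : vr != 0 by apply/vnonzero_rowP.
have [vrQ vr_sing] : qform A vr = 0 /\ forall y, polar A vr y = 0.
  by apply/coneP => //; exists 1; split=> [|i]; rewrite ?oner_neq0 // mxE mul1r.
split=> // x x_nz xQ x_sing.
have [c [_ xc]] := (coneP x x_nz).1 (conj xQ x_sing).
by exists c; apply/rowP => i; rewrite !mxE xc.
Qed.

Lemma meval_mlinsubst_line (M : 'M[k]_4) (G : {mpoly k[4]}) (v q : 'I_4 -> k) a b :
  M \in unitmx -> delta_mx 0 0 *m M = \row_i q i + \row_i v i ->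
  delta_mx 0 3 *m M = \row_i v i ->
  (mlinsubst (invmx M) G).@[fun i => a * v i + b * q i] =
  G.@[(b *: delta_mx 0 0 + (a - b) *: delta_mx 0 3 : 'rV_4) 0].
Proof.
move=> Mu M0 M3; rewrite meval_row meval_mlinsubst row_lin; congr (G.@[_ 0]).
suff -> : a *: \row_i v i + b *: \row_i q i =
          (b *: delta_mx 0 0 + (a - b) *: delta_mx 0 3) *m M by rewrite mulmxK.
rewrite mulmxDl -!scalemxAl M0 M3.
by apply/rowP => i; rewrite !mxE; ring.
Qed.

Lemma quadric_point_row A v q : on_hyp (quadp A) q -> ~ proj_eq q v ->
  qform A (\row_i q i) = 0 /\ forall c, \row_i q i != c *: \row_i v i.
Proof.
move=> [q_nz qQ] q_off; split=> [|c]; first by rewrite -meval_quadp -meval_row.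
apply/eqP => qc; apply: q_off; exists c; split=> [|i].
  by apply: contra_eq_neq qc => ->; rewrite scale0r; apply/vnonzero_rowP.
by have := congr1 (fun x : 'rV_4 => x 0 i) qc; rewrite !mxE.
Qed.

Lemma line_meets_once (F : {mpoly k[4]}) (v q : 'I_4 -> k) d : (0 < d)%N ->
  \row_i q i != - \row_i v i ->
  (forall a b x, x =1 (fun i => a * v i + b * q i) -> F.@[x] = (a - b) ^+ d) ->
  [/\ F.@[v] != 0, F.@[q] != 0 &
      exists p, [/\ on_line v q p, F.@[p] = 0 &
        forall p', on_line v q p' -> F.@[p'] = 0 -> proj_eq p' p]].
Proof.
move=> d_gt0 qv F_line; split.
- by rewrite (@F_line 1 0) => [|i]; rewrite ?subr0 ?expr1n ?oner_neq0 // mul1r mul0r addr0.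
- rewrite (@F_line 0 1) => [|i]; last by rewrite mul1r mul0r add0r.
  by rewrite sub0r expf_neq0 // oppr_eq0 oner_neq0.
exists (fun i => 1 * v i + 1 * q i); split.
- split; last by exists 1, 1.
  by apply/vnonzero_rowP; rewrite row_lin !scale1r addrC addr_eq0.
- by rewrite (@F_line 1 1) // subrr expr0n eqn0Ngt d_gt0.
move=> p' [p'_nz [a [b p'E]]]; rewrite (F_line _ _ _ p'E) => /eqP.
rewrite expf_eq0 subr_eq0 => /andP[_ /eqP ab]; subst b.
exists a; split=> [|i]; last by rewrite p'E; ring.
by apply/eqP => a0; case: p'_nz => i; rewrite p'E a0 !mul0r addr0 eqxx.
Qed.

End Coordinates.

Theorem theorem4p6 (k : closedFieldType) (Q : {mpoly k[4]}) (v q : 'I_4 -> k)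
    (d : nat) :
  quadric_cone Q v -> (2 <= d)%N ->
  on_hyp Q q -> ~ proj_eq q v ->
  exists F : {mpoly k[4]},
    [/\ F \is d.-homog,
        smooth_section Q F,
        F.@[v] != 0,
        F.@[q] != 0 &
        exists p, [/\ on_line v q p, F.@[p] = 0 &
          forall p', on_line v q p' -> F.@[p'] = 0 -> proj_eq p' p]].
Proof.
move=> cone d2 q_cone q_off; have [hom _] := cone.
have [A QA] := dhomog2_quadp hom; subst Q.
have [vr_nz vrQ vr_sing sing] := quadric_cone_polar cone.
have [qrQ qr_off] := quadric_point_row q_cone q_off.
have [M [Mu M0 M3 jetQ]] := cone_frame vr_nz vrQ vr_sing sing qrQ qr_off.
have [n dE] : exists n, d = n.+2 by exists (d - 2)%N; rewrite -addn2 subnK.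
have [c1 [c2 [c3 smooth_nf]]] := exists_smooth_section_nf k n.
pose F := mlinsubst (invmx M) (section_nf c1 c2 c3 n).
have F_line a b x : x =1 (fun i => a * v i + b * q i) -> F.@[x] = (a - b) ^+ d.
  move=> /meval_eq ->; rewrite meval_mlinsubst_line // meval_section_nf_axis;
  by rewrite ?mxE /= ?dE ?mulr0 ?mulr1 ?add0r.
have d_gt0 : (0 < d)%N by rewrite dE.
have qv : \row_i q i != - \row_i v i by rewrite -scaleN1r qr_off.
have [Fv Fq Fp] := line_meets_once d_gt0 qv F_line.
exists F; split=> //.
- by rewrite dE; apply/dhomog_mlinsubst/dhomog_section_nf.
- exact: smooth_section_pullback Mu jetQ (pullback_jet_mlinsubst _ Mu) smooth_nf.
Qed.
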